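(* In the static load balancing game described in the context, let $a$ be a pure Nash equilibrium and let $S(a)=\{j\in[m]: a_{ij}>0\text{ for some } i\in[n]\}$. Then the normalized loads on all servers in $S(a)$ are equal: $$L_j(a)=L:=\frac{\sum_{\ell\in S(a)}s_\ell^0+\sum_{i=1}^n\lambda_i}{\sum_{\ell\in S(a)}\mu_\ell}\qquad\text{for all } j\in S(a).$$
   Context: Static load balancing game: there are $m$ servers $[m]$ with service rates $\mu_j>0$ and initial loads $s_j^0\ge0$, and $n$ players $[n]$; player $i$ holds a job of length $\lambda_i>0$. Player $i$'s action set is $A_i=\{a_i=(a_{i1},\dots,a_{im}):\sum_j a_{ij}=1,\ a_{ij}\ge0\}$. The cost of player $i$ is $$D_i(a)=\sum_{j=1}^m \lambda_i a_{ij}\left(\frac{\lambda_i a_{ij}}{2\mu_j}+\frac{s_j^0+\sum_{k\neq i}\lambda_k a_{kj}}{\mu_j}\right).$$ A pure Nash equilibrium is a profile $a$ with $D_i(a_i,a_{-i})\le D_i(a_i',a_{-i})$ for all $i$, $a_i'\in A_i$. The normalized load on server $j$ under profile $a$ is $L_j(a)=\dfrac{s_j^0+\sum_{i=1}^n\lambda_ia_{ij}}{\mu_j}$. *)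

From HB Require Import structures.
From mathcomp Require Import all_boot all_order all_algebra.
Set Implicit Arguments. Unset Strict Implicit. Unset Printing Implicit Defensive.
Import Order.TTheory GRing.Theory Num.Theory.
Local Open Scope ring_scope.

Definition is_action (R : realFieldType) (m : nat) (x : 'I_m -> R) : Prop :=
  (forall j, 0 <= x j) /\ \sum_(j < m) x j = 1.

Definition cost (R : realFieldType) (m n : nat) (mu s0 : 'I_m -> R)
    (lam : 'I_n -> R) (a : 'I_n -> 'I_m -> R) (i : 'I_n) (x : 'I_m -> R) : R :=
  \sum_(j < m) lam i * x j *
     (lam i * x j / (2 * mu j) + (s0 j + \sum_(k < n | k != i) lam k * a k j) / mu j).

Definition is_NE (R : realFieldType) (m n : nat) (mu s0 : 'I_m -> R)
    (lam : 'I_n -> R) (a : 'I_n -> 'I_m -> R) : Prop :=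
  (forall i, is_action (a i)) /\
  (forall i (x : 'I_m -> R), is_action x -> cost mu s0 lam a i (a i) <= cost mu s0 lam a i x).

Definition load (R : realFieldType) (m n : nat) (mu s0 : 'I_m -> R)
    (lam : 'I_n -> R) (a : 'I_n -> 'I_m -> R) (j : 'I_m) : R :=
  (s0 j + \sum_(i < n) lam i * a i j) / mu j.

Definition used (R : realFieldType) (m n : nat) (a : 'I_n -> 'I_m -> R) : {set 'I_m} :=
  [set j | [exists i, 0 < a i j]].

(* At an equilibrium, player i cannot gain by moving a small amount t of its job
   from a server j it uses to any other server k.  The first-order change in its
   cost is t * lam_i * (L_k - L_j) and the second-order term is nonnegative, so
   L_j <= L_k.  Hence all used servers share one load L, and summing
   L * mu_j = s0_j + sum_i lam_i a_ij over the used servers, which carry every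
   job entirely, gives the value of L. *)
From HB Require Import structures.
From mathcomp Require Import all_boot all_order all_algebra.
From mathcomp Require Import ring lra.
Set Implicit Arguments. Unset Strict Implicit. Unset Printing Implicit Defensive.
Import Order.TTheory GRing.Theory Num.Theory.
Local Open Scope ring_scope.

Lemma ge0_of_ge0_quadratic_near0 (R : realFieldType) (p c d : R) :
  0 < p -> 0 <= c -> (forall t, 0 < t <= p -> 0 <= t * d + t ^+ 2 * c) -> 0 <= d.
Proof.
move=> p_gt0 c_ge0 Hq; rewrite leNgt; apply/negP => d_lt0.
pose e := - d / (c + 1).
have e_gt0 : 0 < e by rewrite divr_gt0 //; lra.
have eE : e * (c + 1) = - d by rewrite mulfVK //; apply/lt0r_neq0; lra.
(* with t := min p e, t * d + t^2 * c <= t * (d + e * c) < 0 *)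
pose t := Order.min p e.
have t_gt0 : 0 < t by rewrite lt_min p_gt0 e_gt0.
have t_le_e : t <= e by rewrite ge_min lexx orbT.
have := Hq t; rewrite t_gt0 ge_min lexx /= => /(_ isT).
have : t * c <= e * c by rewrite ler_wpM2r.
nra.
Qed.

Section LoadBalancing.
Variables (R : realFieldType) (m n : nat) (mu s0 : 'I_m -> R) (lam : 'I_n -> R).
Variable a : 'I_n -> 'I_m -> R.

Definition move_mass (x : 'I_m -> R) (j k : 'I_m) (t : R) (l : 'I_m) : R :=
  x l + (if l == k then t else 0) - (if l == j then t else 0).

Lemma move_mass_action x j k t :
  is_action x -> j != k -> 0 <= t <= x j -> is_action (move_mass x j k t).
Proof.
move=> [x_ge0 x_sum1] njk /andP[t_ge0 t_le]; split.
  move=> l; rewrite /move_mass; case: (eqVneq l j) => [->|_].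
    by rewrite (negbTE njk); lra.
  by case: ifP => _; have := x_ge0 l; lra.
rewrite /move_mass sumrB big_split /= -!big_mkcond /= !big_pred1_eq x_sum1; lra.
Qed.

Lemma loadE i l : load mu s0 lam a l =
  (lam i * a i l + (s0 l + \sum_(k < n | k != i) lam k * a k l)) / mu l.
Proof. by rewrite /load (bigD1 i) //=; congr (_ / _); ring. Qed.

Lemma cost_move_mass i j k t :
  j != k -> mu j != 0 -> mu k != 0 ->
  cost mu s0 lam a i (move_mass (a i) j k t) - cost mu s0 lam a i (a i) =
  t * (lam i * (load mu s0 lam a k - load mu s0 lam a j))
  + t ^+ 2 * (lam i ^+ 2 * ((2 * mu j)^-1 + (2 * mu k)^-1)).
Proof.
move=> njk mu_j mu_k; rewrite /cost -sumrB (bigD1 j) //= (bigD1 k) 1?eq_sym //=.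
rewrite [\sum_(l < m | _ && _) _]big1 ?addr0; last first.
  move=> l /andP[lj lk].
  by rewrite /move_mass (negbTE lj) (negbTE lk) addr0 subr0 subrr.
rewrite /move_mass !eqxx (negbTE njk) eq_sym (negbTE njk) !(loadE i).
by field; rewrite mu_j mu_k.
Qed.

Lemma sum_used_action i : is_action (a i) -> \sum_(l in used a) a i l = 1.
Proof.
move=> [a_ge0 <-]; rewrite [RHS](bigID (mem (used a))) /=.
rewrite [X in _ = _ + X]big1 ?addr0 // => l l_unused.
apply/eqP; rewrite eq_le a_ge0 andbT leNgt; apply: contra l_unused => ail.
by rewrite inE; apply/existsP; exists i.
Qed.

Lemma sum_load_used :
  (forall j, 0 < mu j) -> (forall i, is_action (a i)) ->
  \sum_(l in used a) load mu s0 lam a l * mu l =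
  \sum_(l in used a) s0 l + \sum_(i < n) lam i.
Proof.
move=> mu_gt0 a_act.
rewrite (eq_bigr (fun l => s0 l + \sum_(i < n) lam i * a i l)) => [|l _]; last first.
  by rewrite divfK ?lt0r_neq0.
rewrite big_split /= exchange_big /=; congr (_ + _); apply: eq_bigr => i _.
by rewrite -mulr_sumr sum_used_action ?mulr1.
Qed.

Hypotheses (mu_gt0 : forall j, 0 < mu j) (lam_gt0 : forall i, 0 < lam i).
Hypothesis aNE : is_NE mu s0 lam a.

Lemma NE_load_le i j k :
  0 < a i j -> load mu s0 lam a j <= load mu s0 lam a k.
Proof.
move=> aij_gt0; have [a_act a_best] := aNE.
have [<-|njk] := eqVneq j k; first exact: lexx.
pose c := lam i ^+ 2 * ((2 * mu j)^-1 + (2 * mu k)^-1).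
have c_ge0 : 0 <= c.
  by rewrite mulr_ge0 ?sqr_ge0 // addr_ge0 // invr_ge0 mulr_ge0 // ltW.
rewrite -subr_ge0 -(pmulr_rge0 _ (lam_gt0 i)).
apply: (ge0_of_ge0_quadratic_near0 aij_gt0 c_ge0) => t /andP[t_gt0 t_le].
have x_act : is_action (move_mass (a i) j k t).
  by apply: move_mass_action (a_act i) njk _; rewrite (ltW t_gt0).
rewrite -cost_move_mass ?lt0r_neq0 // subr_ge0; exact: a_best.
Qed.

Lemma NE_load_eq_used j k : j \in used a -> k \in used a ->
  load mu s0 lam a j = load mu s0 lam a k.
Proof.
rewrite !inE => /existsP[i aij] /existsP[i' ai'k].
by apply/le_anti; rewrite (NE_load_le _ aij) (NE_load_le _ ai'k).
Qed.

End LoadBalancing.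

Theorem lemma3 (R : realFieldType) (m n : nat) (mu s0 : 'I_m -> R) (lam : 'I_n -> R)
    (a : 'I_n -> 'I_m -> R)
    (hmu : forall j, 0 < mu j) (hs0 : forall j, 0 <= s0 j) (hlam : forall i, 0 < lam i)
    (hNE : is_NE mu s0 lam a) :
  forall j, j \in used a ->
    load mu s0 lam a j =
    (\sum_(l in used a) s0 l + \sum_(i < n) lam i) / (\sum_(l in used a) mu l).
Proof.
move=> j j_used.
have mu_used_gt0 : 0 < \sum_(l in used a) mu l.
  by rewrite (bigD1 j) //= ltr_pwDl // sumr_ge0 // => l _; apply/ltW.
rewrite -(sum_load_used s0 lam hmu hNE.1) (eq_bigr (fun l => load mu s0 lam a j * mu l)).
  by rewrite -mulr_sumr mulfK ?lt0r_neq0.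
by move=> l l_used; rewrite (NE_load_eq_used hmu hlam hNE l_used j_used).
Qed.
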